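(* Let $B$ be a Ferrers board with $n$ columns, padded with columns of height zero on the left so that its root vector $\xi(B)=\langle z_1,\ldots,z_n\rangle$ has only non-negative entries. For each integer $k$ let $v_k$ be the number of entries of $\xi(B)$ equal to $k$, and let $M$ be the greatest integer with $v_M\neq 0$. If, for every $0\le i<M-1$, $v_i>1$ implies $v_{i+1}>1$, then $B$ is connected by a sequence of edges in the rook equivalence graph $G(B)$ to a Ferrers board $B'$ whose root vector has the form $\xi(B')=\langle 0,1,\ldots,M-1,M,\ldots,z_n\rangle$, i.e. the first $M+1$ entries of $\xi(B')$ are $0,1,\ldots,M$ in increasing order.
   Context: A Ferrers board is given by a weakly increasing sequence of non-negative integers $B=(b_1,\ldots,b_n)$ of column heights; it is the set of unit cells in the first quadrant lying in column $i$ and rows $1,\ldots,b_i$. Prepending columns of height $0$ on the left does not change the board, and boards are compared using the same number of columns by such padding. A placement of $k$ rooks on $B$ is a set of $k$ cells of $B$ no two in the same row or column; $r_k(B)$ is the number of such placements. Two boards are rook equivalent if they have equal $r_k$ for all $k\ge 0$. The root vector of $B$ is $\xi(B)=\langle 0-b_1,1-b_2,\ldots,(n-1)-b_n\rangle$. The rook equivalence graph $G(B)$ has as vertices all Ferrers boards rook equivalent to $B$, and $\{B_1,B_2\}$ is an edge iff, written with the same number of columns, $B_1$ and $B_2$ differ in exactly two columns $i$ and $j$, where $B_1$ has $k$ more cells than $B_2$ in column $i$ and $k$ fewer cells than $B_2$ in column $j$, for some $k>0$. *)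

From mathcomp Require Import all_boot all_order all_algebra.
Set Implicit Arguments. Unset Strict Implicit. Unset Printing Implicit Defensive.
Import Order.TTheory GRing.Theory Num.Theory.

(* A Ferrers board is a weakly increasing sequence of column heights
   b = [:: b_1; ...; b_n]; column i (0-indexed) holds the cells in rows
   0, ..., b_i - 1 (0-indexed). *)
Definition ferrers (b : seq nat) : bool := sorted leq b.

Definition height (b : seq nat) : nat := foldr maxn 0 b.

Definition rook_number (b : seq nat) (k : nat) : nat :=
  #|[set P : {set 'I_(size b) * 'I_(height b)} |
      [&& [forall c in P, (c.2 < nth 0 b c.1)%N],
          [forall c in P, forall d in P,
              ((c.1 == d.1) || (c.2 == d.2)) ==> (c == d)]
        & #|P| == k]]|.

Definition rook_equiv (b1 b2 : seq nat) : Prop :=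
  forall k, rook_number b1 k = rook_number b2 k.

Definition pad (b : seq nat) (m : nat) : seq nat := nseq (m - size b) 0%N ++ b.

Definition rook_edge (b1 b2 : seq nat) : Prop :=
  let m := maxn (size b1) (size b2) in
  let c1 := pad b1 m in
  let c2 := pad b2 m in
  exists i j k : nat,
    [/\ (i < m)%N, (j < m)%N, i != j & (0 < k)%N] /\
    [/\ nth 0%N c1 i = (nth 0%N c2 i + k)%N,
        (nth 0%N c1 j + k)%N = nth 0%N c2 j &
        forall l, (l < m)%N -> l != i -> l != j -> nth 0%N c1 l = nth 0%N c2 l].

Definition G_vertex (B b : seq nat) : Prop := ferrers b /\ rook_equiv b B.

Inductive G_connected (B : seq nat) : seq nat -> seq nat -> Prop :=
| G_refl b : G_connected B b b
| G_step b1 b2 b3 :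
    G_vertex B b1 -> G_vertex B b2 -> rook_edge b1 b2 ->
    G_connected B b2 b3 -> G_connected B b1 b3.

Definition root_vector (b : seq nat) : seq int :=
  [seq (i%:Z - (nth 0%N b i)%:Z)%R | i <- iota 0 (size b)].

Definition vcount (b : seq nat) (k : int) : nat := count (pred1 k) (root_vector b).

From mathcomp Require Import all_boot all_order all_algebra.
From mathcomp Require Import zify ring.
Set Implicit Arguments. Unset Strict Implicit. Unset Printing Implicit Defensive.
Import Order.TTheory GRing.Theory Num.Theory.

(* The rook numbers of a Ferrers board only depend on the multiset of entries
   of its root vector: placing rooks column by column, column m of height b_m
   offers b_m - k = m - z_m - k free cells once k rooks sit in earlier columns,
   and the resulting recurrence is symmetric in consecutive root entries.
   Exchanging two root entries z_i < z_j with i < j therefore moves z_j - z_i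
   cells from column i to column j without changing the rook numbers: an edge of
   G(B). The new board is still a Ferrers board when z_j <= z_(i-1) + 1 and
   z_(j+1) <= z_i + 1, and the exchange decreases sum_l l z_l, so it suffices to
   find such an exchange while the root vector does not start with 0, 1, ..., M.
   Taking for j the last column with z_j > z_i, only z_j <= z_(i-1) + 1 needs care.
   Let z_(p+1) = a <= p be the first defect and j0 the last column with
   z_j0 > a. Either z_j0 <= p + 1 and i = p + 1 works, or, since a occurs twice,
   the hypothesis on multiplicities makes z_j0 - 1 occur twice before j0; the
   root vector comes back down to z_j0 - 1 between these two occurrences, and
   the column where it does so is a valid i. *)

(* [root_rook_number xi k] lists the root vector from the last column to the
   first: the head [c] of [c :: xi] is the root entry of column [size xi], whose
   height is [size xi - c]; once [k] rooks sit in the earlier columns, that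
   column has [size xi - c - k] free cells left. *)
Fixpoint root_rook_number (xi : seq int) (k : nat) : int :=
  if k is k'.+1 then
    if xi is c :: xi' then
      (root_rook_number xi' k + ((size xi')%:Z - c - k'%:Z) * root_rook_number xi' k')%R
    else 0%R
  else 1%R.

Lemma root_rook_number0 xi : root_rook_number xi 0 = 1%R.
Proof. by case: xi. Qed.

Lemma root_rook_number_swap c d s :
  root_rook_number [:: c, d & s] =1 root_rook_number [:: d, c & s].
Proof. by case=> [|[|k]] //=; rewrite ?root_rook_number0 ?intS; ring. Qed.

Lemma eq_root_rook_number_catl u s t : size s = size t ->
  root_rook_number s =1 root_rook_number t ->
  root_rook_number (u ++ s) =1 root_rook_number (u ++ t).
Proof.
move=> eq_size eq_st; elim: u => [|x u IHu] [|k] //=.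
by rewrite !IHu !size_cat eq_size.
Qed.

Lemma root_rook_number_move x s t :
  root_rook_number (x :: s ++ t) =1 root_rook_number (s ++ x :: t).
Proof.
elim: s => [//|y s IHs] k.
rewrite !cat_cons root_rook_number_swap.
by apply: (@eq_root_rook_number_catl [:: y]); rewrite //= !size_cat addnS.
Qed.

Lemma root_rook_number_catCA s1 s2 s3 :
  root_rook_number (s1 ++ s2 ++ s3) =1 root_rook_number (s2 ++ s1 ++ s3).
Proof.
elim: s1 => [//|x s1 IHs1] k; rewrite cat_cons.
have -> : root_rook_number (x :: s1 ++ s2 ++ s3) k = root_rook_number (x :: s2 ++ s1 ++ s3) k.
  by apply: (@eq_root_rook_number_catl [:: x]); rewrite // !size_cat addnCA.
by rewrite root_rook_number_move catA.
Qed.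

Lemma perm_root_rook_number s t : perm_eq s t ->
  root_rook_number s =1 root_rook_number t.
Proof.
move=> pst k; apply: (catCA_perm_ind (P := fun u => _ = root_rook_number u k)) pst _ => //.
by move=> s1 s2 s3 ->; apply: root_rook_number_catCA.
Qed.

Section ColumnRecurrence.
Variables (n h : nat) (w : nat -> nat).
Implicit Types (P Q : {set 'I_n * 'I_h}) (x y : 'I_n * 'I_h).

Definition non_attacking P : bool :=
  [forall x in P, forall y in P, ((x.1 == y.1) || (x.2 == y.2)) ==> (x == y)].

Definition placements (m k : nat) : {set {set 'I_n * 'I_h}} :=
  [set P : {set 'I_n * 'I_h} | [&& [forall x in P, (x.1 < m) && (x.2 < w x.1)], non_attacking P & #|P| == k]].

Lemma non_attackingP P : reflect
  (forall x y, x \in P -> y \in P -> (x.1 == y.1) || (x.2 == y.2) -> x = y)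
  (non_attacking P).
Proof.
apply: (iffP forall_inP) => [naP x y Px Py xy|naP x Px].
  by have /forall_inP /(_ y Py) := naP x Px; rewrite xy => /eqP.
by apply/forall_inP => y Py; apply/implyP => /(naP x y Px Py) ->.
Qed.

Lemma placementsP m k P : reflect
  [/\ forall x, x \in P -> (x.1 < m) && (x.2 < w x.1), non_attacking P & #|P| = k]
  (P \in placements m k).
Proof.
rewrite inE; apply: (iffP and3P) => [[/forall_inP inP naP /eqP cardP]|[inP naP cardP]].
  by split.
by split => //; [apply/forall_inP | apply/eqP].
Qed.

Lemma placements0 m : placements m 0 = [set set0].
Proof.
apply/setP => P; rewrite !inE cards_eq0.
have [->|] := eqVneq P set0; last by rewrite !andbF.
by rewrite andbT; apply/andP; split; apply/forall_inP => x; rewrite inE.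
Qed.

Lemma placements_no_column k : placements 0 k.+1 = set0.
Proof.
apply/setP => P; rewrite !inE; apply/negbTE/negP => /and3P [/forall_inP inP _ /eqP cardP].
have /card_gt0P [x /inP] : 0 < #|P| by rewrite cardP.
by rewrite ltn0.
Qed.

Definition rows P : {set 'I_h} := [set x.2 | x in P].

Lemma card_rows P : non_attacking P -> #|rows P| = #|P|.
Proof.
move/non_attackingP => naP; apply: card_in_imset => x y Px Py xy.
by apply: naP => //; rewrite xy eqxx orbT.
Qed.

Lemma card_rows_below t : t <= h -> #|[set r : 'I_h | r < t]| = t.
Proof.
move=> le_th; have widen_inj : injective (widen_ord le_th).
  by move=> r r' eq_rr'; apply: val_inj; exact: (congr1 val eq_rr').
rewrite -[RHS]card_ord -(card_imset _ widen_inj).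
apply: eq_card => r; rewrite !inE; apply/idP/imsetP => [lt_rt|[r' _ ->]].
  by exists (Ordinal lt_rt); last apply/val_inj.
by rewrite /= ltn_ord.
Qed.

Variables (col : 'I_n).
Hypotheses (col_le_h : w col <= h) (col_max : forall j, j < col -> w j <= w col).

Lemma rows_placements_sub k Q : Q \in placements col k ->
  rows Q \subset [set r : 'I_h | r < w col].
Proof.
case/placementsP => inQ _ _; apply/subsetP => _ /imsetP [x /inQ /andP [x1 x2] ->].
by rewrite inE (leq_trans x2) ?col_max.
Qed.

Lemma placements_bound k Q : Q \in placements col k -> k <= w col.
Proof.
move=> Qk; have /placementsP [_ naQ <-] := Qk.
by rewrite -card_rows // -(card_rows_below col_le_h) subset_leq_card ?(rows_placements_sub Qk).
Qed.

Definition free_rows Q := [set r : 'I_h | r < w col] :\: rows Q.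

Lemma card_free_rows k Q : Q \in placements col k -> #|free_rows Q| = w col - k.
Proof.
move=> Qk; have /placementsP [_ naQ <-] := Qk.
rewrite cardsD (setIidPr (rows_placements_sub Qk)).
by rewrite card_rows_below // card_rows.
Qed.

Definition uses_col : {set {set 'I_n * 'I_h}} := [set P : {set 'I_n * 'I_h} | [exists x in P, x.1 == col]].

Definition drop_col P := [set x in P | x.1 != col].

Lemma placementsS_setD k : placements col.+1 k :\: uses_col = placements col k.
Proof.
apply/setP => P; rewrite inE [P \in uses_col]inE negb_exists_in.
apply/andP/placementsP => [[/forall_inP notcol /placementsP [inP naP cardP]]|[inP naP cardP]].
  split => // x Px; have := inP x Px; have := notcol x Px.
  by rewrite ltnS leq_eqVlt -val_eqE => /negbTE ->.
split; first by apply/forall_inP => x /inP /andP []; rewrite -val_eqE; case: ltngtP.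
by apply/placementsP; split => // x /inP /andP [x1 ->]; rewrite ltnW.
Qed.

Lemma drop_colE P x0 : non_attacking P -> x0 \in P -> x0.1 = col -> drop_col P = P :\ x0.
Proof.
move=> /non_attackingP naP Px0 x01; apply/setP => x; rewrite !inE andbC.
have [Px|] := boolP (x \in P); rewrite ?andbF // !andbT.
apply/idP/idP => [|/eqP neq]; first by apply: contra => /eqP ->; rewrite x01.
by apply/eqP => x1; apply: neq; apply: naP; rewrite ?x1 ?x01 ?eqxx.
Qed.

Lemma notin_placements_col k Q r : Q \in placements col k -> (col, r) \notin Q.
Proof. by case/placementsP => inQ _ _; apply/negP => /inQ /andP []; rewrite ltnn. Qed.

Lemma drop_col_placements k P : P \in placements col.+1 k.+1 :&: uses_col ->
  drop_col P \in placements col k.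
Proof.
rewrite inE [P \in uses_col]inE => /andP [/placementsP [inP naP cardP] /exists_inP [x0 Px0 /eqP x01]].
have naP' := naP; move/non_attackingP in naP'.
rewrite (drop_colE naP Px0 x01); apply/placementsP; split.
- move=> x /setD1P [neq /[dup] Px /inP /andP [+ ->]]; rewrite ltnS leq_eqVlt andbT.
  case/orP => // /eqP /val_inj x1; case/eqP: neq; apply: naP' => //.
  by rewrite x1 x01 eqxx.
- by apply/non_attackingP => x y /setD1P [_ Px] /setD1P [_ Py]; apply: naP'.
- by move: cardP; rewrite (cardsD1 x0) Px0 => -[].
Qed.

Lemma add_col_placements k Q r : Q \in placements col k -> r \in free_rows Q ->
  (col, r) |: Q \in placements col.+1 k.+1 :&: uses_col.
Proof.
move=> /[dup] Qk /placementsP [inQ /non_attackingP naQ cardQ] /setDP [].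
rewrite inE => lt_r r_notin; rewrite inE [_ \in uses_col]inE.
apply/andP; split; last by apply/exists_inP; exists (col, r); rewrite ?setU11.
apply/placementsP; split.
- move=> x /setU1P [-> /=|/inQ /andP [x1 ->]]; first by rewrite ltnS leqnn.
  by rewrite ltnW.
- have attack_new x : x \in Q -> (col == x.1) || (r == x.2) = false.
    move=> Qx; apply/negbTE; rewrite negb_or; apply/andP; split.
      by apply/eqP => x1; have /andP [] := inQ x Qx; rewrite -x1 ltnn.
    by apply: contra r_notin => /eqP ->; apply/imsetP; exists x.
  apply/non_attackingP => x y /setU1P [->|Qx] /setU1P [->|Qy] //=.
  + by rewrite attack_new.
  + by rewrite (eq_sym x.1) (eq_sym x.2) attack_new.
  + exact: naQ.
- by rewrite cardsU1 (notin_placements_col _ Qk) cardQ.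
Qed.

Lemma drop_col_setU1 k Q r : Q \in placements col k -> drop_col ((col, r) |: Q) = Q.
Proof.
move=> Qk; apply/setP => x; rewrite !inE.
have [->|_] /= := eqVneq x (col, r).
  by rewrite eqxx (negbTE (notin_placements_col r Qk)).
case/placementsP: Qk => inQ _ _.
by case: (boolP (x \in Q)) => //= /inQ /andP [x1 _]; apply/eqP => eq_x1; rewrite eq_x1 ltnn in x1.
Qed.

Lemma placements_fiber k Q : Q \in placements col k ->
  [set P in placements col.+1 k.+1 :&: uses_col | drop_col P == Q] =
  [set (col, r) |: Q | r in free_rows Q].
Proof.
move=> Qk; apply/setP => P; rewrite inE; apply/andP/imsetP => [[PkS /eqP <-]|[r Fr ->]].
  have := PkS; rewrite inE [P \in uses_col]inE => /andP [/placementsP [inP naP _] /exists_inP [x0 Px0 /eqP x01]].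
  have dropP := drop_colE naP Px0 x01; move/non_attackingP: naP => naP.
  exists x0.2; last by rewrite -x01 -surjective_pairing dropP setD1K.
  rewrite inE; apply/andP; split; last by have /andP [_] := inP x0 Px0; rewrite inE x01.
  apply/imsetP => -[x]; rewrite dropP => /setD1P [neq Px] eq2.
  by case/eqP: neq; apply: naP => //; rewrite eq2 eqxx orbT.
by split; [apply: add_col_placements | rewrite (drop_col_setU1 _ Qk)].
Qed.

Lemma card_placementsS k :
  #|placements col.+1 k.+1| = #|placements col k.+1| + #|placements col k| * (w col - k).
Proof.
rewrite -(cardsID uses_col (placements col.+1 k.+1)) placementsS_setD addnC; congr (_ + _).
rewrite -sum1_card (partition_big drop_col (mem (placements col k))); last first.
  by move=> P; apply: drop_col_placements.
rewrite -sum_nat_const; apply: eq_bigr => Q Qk.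
rewrite sum1dep_card (placements_fiber Qk) card_in_imset ?(card_free_rows Qk) // => r r' _ _ eq_rr'.
have : (col, r) \in (col, r') |: Q by rewrite -eq_rr' setU11.
by rewrite !inE (negbTE (notin_placements_col _ Qk)) orbF => /eqP [].
Qed.

End ColumnRecurrence.

Lemma height_ge (b : seq nat) x : x \in b -> x <= height b.
Proof. by move=> bx; rewrite /height foldrE (leq_bigmax_seq x). Qed.

Definition rev_root_prefix (b : seq nat) (m : nat) : seq int :=
  rev [seq (i%:Z - (nth 0 b i)%:Z)%R | i <- iota 0 m].

Lemma rev_root_prefixS b m :
  rev_root_prefix b m.+1 = (m%:Z - (nth 0 b m)%:Z)%R :: rev_root_prefix b m.
Proof. by rewrite /rev_root_prefix -addn1 iotaD map_cat rev_cat. Qed.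

Lemma size_rev_root_prefix b m : size (rev_root_prefix b m) = m.
Proof. by rewrite size_rev size_map size_iota. Qed.

Lemma rook_number_placements b k :
  rook_number b k = #|placements (size b) (height b) (nth 0 b) (size b) k|.
Proof.
apply: eq_card => P; rewrite !inE; congr (_ && _).
by apply: eq_forallb => x; rewrite ltn_ord.
Qed.

Lemma card_placements_root_rook_number b m k : ferrers b -> m <= size b ->
  Posz #|placements (size b) (height b) (nth 0 b) m k| = root_rook_number (rev_root_prefix b m) k.
Proof.
move=> fb; elim: m k => [|m IHm] k le_mb.
  by case: k => [|k]; rewrite ?placements0 ?placements_no_column ?cards1 ?cards0.
pose col := Ordinal le_mb.
have col_le_h : nth 0 b col <= height b by rewrite height_ge ?mem_nth.
have col_max j : j < col -> nth 0 b j <= nth 0 b col.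
  move=> lt_jm; have lt_jb := ltn_trans lt_jm le_mb.
  by apply: (sorted_leq_nth leq_trans leqnn 0 fb); rewrite ?inE // ltnW.
rewrite rev_root_prefixS; case: k => [|k]; first by rewrite placements0 cards1.
have le_mb' := ltnW le_mb.
rewrite (card_placementsS col_le_h col_max) /= -!IHm // size_rev_root_prefix.
have [le_kb|lt_bk] := leqP k (nth 0 b m).
  by rewrite PoszD PoszM -subzn //; ring.
suff -> : #|placements (size b) (height b) (nth 0 b) m k| = 0 by rewrite mul0n addn0 mulr0 addr0.
apply: eq_card0 => Q; apply/negbTE/negP => /(placements_bound col_le_h col_max).
by rewrite leqNgt lt_bk.
Qed.

Lemma rook_number_root_vector b k : ferrers b ->
  Posz (rook_number b k) = root_rook_number (rev (root_vector b)) k.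
Proof. by move=> fb; rewrite rook_number_placements card_placements_root_rook_number. Qed.

Lemma rook_equiv_perm_root_vector b1 b2 : ferrers b1 -> ferrers b2 ->
  perm_eq (root_vector b1) (root_vector b2) -> rook_equiv b1 b2.
Proof.
move=> fb1 fb2 pb k; apply/eqP; rewrite -eqz_nat !rook_number_root_vector //.
rewrite (perm_root_rook_number (t := rev (root_vector b2))) //.
by rewrite perm_rev perm_sym perm_rev perm_sym.
Qed.

(* [z] is the root vector of the board [board_of_roots z] of column heights
   [l - z_l]; the conditions say that these are non-negative and weakly increasing. *)
Definition ferrers_roots (z : seq nat) : Prop :=
  (forall l, l < size z -> nth 0 z l <= l) /\
  (forall l, l.+1 < size z -> nth 0 z l.+1 <= (nth 0 z l).+1).

Definition board_of_roots (z : seq nat) : seq nat := mkseq (fun l => l - nth 0 z l) (size z).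

Definition roots_of_board (b : seq nat) : seq nat := [seq i - nth 0 b i | i <- iota 0 (size b)].

Lemma size_board_of_roots z : size (board_of_roots z) = size z.
Proof. exact: size_mkseq. Qed.

Lemma nth_board_of_roots z l : l < size z -> nth 0 (board_of_roots z) l = l - nth 0 z l.
Proof. exact: nth_mkseq. Qed.

Lemma ferrers_board_of_roots z : ferrers_roots z -> ferrers (board_of_roots z).
Proof.
case=> le_zl le_zS; apply/(sortedP 0) => l; rewrite size_board_of_roots => lt_lz.
rewrite !nth_board_of_roots ?(ltnW lt_lz) //.
by have := le_zl l (ltnW lt_lz); have := le_zS l lt_lz; lia.
Qed.

Lemma root_vector_board_of_roots z : ferrers_roots z ->
  root_vector (board_of_roots z) = map Posz z.
Proof.
case=> le_zl _; rewrite /root_vector size_mkseq -[in RHS](mkseq_nth 0 z) /mkseq -map_comp.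
apply/eq_in_map => l; rewrite mem_iota => /= lt_lz.
by rewrite nth_mkseq // subzn ?leq_subr // subKn ?le_zl.
Qed.

Lemma ferrers_roots_mem_lt z x : ferrers_roots z -> x \in z -> x < size z.
Proof.
case=> le_zl _ zx; have lt_iz : index x z < size z by rewrite index_mem.
by have := le_zl _ lt_iz; rewrite nth_index //; lia.
Qed.

Section RootsOfBoard.
Variable b : seq nat.
Hypothesis root_vector_ge0 : forall z, z \in root_vector b -> (0 <= z)%R.

Lemma nth_board_le l : l < size b -> nth 0 b l <= l.
Proof.
move=> lt_lb; rewrite -lez_nat -subr_ge0; apply: root_vector_ge0.
by apply/mapP; exists l; rewrite ?mem_iota.
Qed.

Lemma size_roots_of_board : size (roots_of_board b) = size b.
Proof. by rewrite size_map size_iota. Qed.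

Lemma nth_roots_of_board l : l < size b -> nth 0 (roots_of_board b) l = l - nth 0 b l.
Proof. by move=> lt_lb; rewrite (nth_map 0) ?size_iota ?nth_iota. Qed.

Lemma root_vector_roots_of_board : root_vector b = map Posz (roots_of_board b).
Proof.
rewrite /root_vector -map_comp; apply/eq_in_map => l; rewrite mem_iota => /= lt_lb.
by rewrite subzn ?nth_board_le.
Qed.

Lemma roots_of_boardK : board_of_roots (roots_of_board b) = b.
Proof.
apply: (@eq_from_nth _ 0); rewrite size_board_of_roots size_roots_of_board // => l lt_lb.
by rewrite nth_board_of_roots ?size_roots_of_board // nth_roots_of_board // subKn ?nth_board_le.
Qed.

Lemma ferrers_roots_of_board : ferrers b -> ferrers_roots (roots_of_board b).
Proof.
move/(sortedP 0) => sorted_b; split; rewrite size_roots_of_board => l lt_lb.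
  by rewrite nth_roots_of_board // leq_subr.
rewrite !nth_roots_of_board ?(ltnW lt_lb) //.
by have := nth_board_le (ltnW lt_lb); have := nth_board_le lt_lb; have := sorted_b l lt_lb; lia.
Qed.

End RootsOfBoard.

Definition swap_index (i j l : nat) : nat := if l == i then j else if l == j then i else l.

Definition swap_roots (z : seq nat) (i j : nat) : seq nat :=
  mkseq (fun l => nth 0 z (swap_index i j l)) (size z).

Lemma swap_indexK i j : involutive (swap_index i j).
Proof.
move=> l; rewrite /swap_index; have [->|ne_li] := eqVneq l i.
  by have [->|ne_ji] := eqVneq j i; rewrite ?eqxx.
have [->|ne_lj] := eqVneq l j; first by rewrite eqxx.
by rewrite (negbTE ne_li) (negbTE ne_lj).
Qed.

Lemma swap_index_l i j : swap_index i j i = j.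
Proof. by rewrite /swap_index eqxx. Qed.

Lemma swap_index_r i j : swap_index i j j = i.
Proof. by rewrite /swap_index; case: eqVneq => [->|]; rewrite ?eqxx. Qed.

Lemma swap_index_id i j l : l != i -> l != j -> swap_index i j l = l.
Proof. by move=> ne_li ne_lj; rewrite /swap_index (negbTE ne_li) (negbTE ne_lj). Qed.

Lemma size_swap_roots z i j : size (swap_roots z i j) = size z.
Proof. exact: size_mkseq. Qed.

Lemma nth_swap_roots z i j l : l < size z ->
  nth 0 (swap_roots z i j) l = nth 0 z (swap_index i j l).
Proof. exact: nth_mkseq. Qed.

Lemma perm_swap_roots z i j : i < size z -> j < size z -> perm_eq (swap_roots z i j) z.
Proof.
move=> lt_iz lt_jz; rewrite /swap_roots -[X in perm_eq _ X](mkseq_nth 0 z) /mkseq.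
rewrite (map_comp (nth 0 z) (swap_index i j)) perm_map // uniq_perm ?iota_uniq //.
  by rewrite (map_inj_uniq (can_inj (swap_indexK i j))) iota_uniq.
move=> l; rewrite -[l in LHS](swap_indexK i j) (mem_map (can_inj (swap_indexK i j))) !mem_iota.
by rewrite /swap_index; case: eqVneq => [->|_]; [|case: eqVneq => [->|_]]; rewrite ?add0n ?lt_iz ?lt_jz.
Qed.

Definition admissible_swap (z : seq nat) (i j : nat) : Prop :=
  [/\ 0 < i < j, j < size z, nth 0 z i < nth 0 z j, nth 0 z j <= (nth 0 z i.-1).+1
    & j.+1 < size z -> nth 0 z j.+1 <= (nth 0 z i).+1].

Lemma ferrers_roots_swap z i j : ferrers_roots z -> admissible_swap z i j ->
  ferrers_roots (swap_roots z i j).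
Proof.
case=> le_zl le_zS [/andP [i_gt0 lt_ij] lt_jn lt_zij le_zji le_zj1].
have le_zi1 := le_zl i.-1 (leq_ltn_trans (leq_pred i) (ltn_trans lt_ij lt_jn)).
have le_zi := le_zl i (ltn_trans lt_ij lt_jn).
split; rewrite size_swap_roots => l lt_ln; rewrite !nth_swap_roots ?(ltnW lt_ln) //.
  have := le_zl l lt_ln; rewrite /swap_index.
  by case: eqVneq => [->|_]; [|case: eqVneq => [->|_]]; lia.
have := le_zS l lt_ln; rewrite /swap_index.
by repeat (case: eqVneq => [?|?]; first subst); rewrite /= in le_zji *; lia.
Qed.

Definition root_weight (z : seq nat) : nat := \sum_(l < size z) nth 0 z l * l.

Lemma root_weight_swap z i j : i < j -> j < size z -> nth 0 z i < nth 0 z j ->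
  root_weight (swap_roots z i j) < root_weight z.
Proof.
move=> lt_ij lt_jn lt_zij; have lt_in := ltn_trans lt_ij lt_jn.
pose i' : 'I_(size z) := Ordinal lt_in; pose j' : 'I_(size z) := Ordinal lt_jn.
have ne_ji : j' != i' by rewrite -val_eqE /= gtn_eqF.
have sum_split (F : 'I_(size z) -> nat) :
    \sum_(l < size z) F l = F i' + F j' + \sum_(l < size z | (l != i') && (l != j')) F l.
  rewrite (bigD1 i') // (bigD1 j') //= addnA.
  by congr (_ + _); apply: eq_bigl => l; rewrite andbC.
rewrite /root_weight size_swap_roots !sum_split /= !nth_swap_roots //.
rewrite swap_index_l swap_index_r.
rewrite (eq_bigr (fun l : 'I_(size z) => nth 0 z l * l)) ?ltn_add2r; last first.
  move=> l /andP [ne_li ne_lj].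
  by rewrite nth_swap_roots // swap_index_id -?val_eqE.
(* the difference of the two sides is (z_j - z_i) (j - i) > 0 *)
nia.
Qed.

Lemma rook_edge_swap_roots z i j : i < j -> j < size z -> nth 0 z i < nth 0 z j <= i ->
  rook_edge (board_of_roots z) (board_of_roots (swap_roots z i j)).
Proof.
move=> lt_ij lt_jn /andP [lt_zij le_zji]; have lt_in := ltn_trans lt_ij lt_jn.
rewrite /rook_edge !size_board_of_roots size_swap_roots maxnn /pad.
rewrite !size_board_of_roots size_swap_roots subnn /=.
exists i, j, (nth 0 z j - nth 0 z i); split; first by split; rewrite ?subn_gt0 ?ltn_eqF.
rewrite !nth_board_of_roots ?size_swap_roots // !nth_swap_roots // swap_index_l swap_index_r.
split; [lia | lia |] => l lt_ln ne_li ne_lj.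
by rewrite !nth_board_of_roots ?size_swap_roots // nth_swap_roots // swap_index_id.
Qed.

Lemma count_mem_gt1P (T : eqType) (x0 x : T) (s : seq T) :
  reflect (exists f u, [/\ f < u, u < size s, nth x0 s f = x & nth x0 s u = x])
          (1 < count_mem x s).
Proof.
apply: (iffP idP) => [|[f [u [lt_fu lt_us sf su]]]].
  elim: s => [//|y s IHs] /=; have [->|_] /= := eqVneq y x.
    rewrite add1n ltnS -has_count => /(has_nthP x0) [u lt_us su].
    by exists 0, u.+1; split => //; apply/eqP.
  by rewrite add0n => /IHs [f [u [lt_fu lt_us sf su]]]; exists f.+1, u.+1.
have in_take : 0 < count_mem x (take u s).
  rewrite -has_count; apply/(has_nthP x0); exists f; first by rewrite size_take lt_us.
  by rewrite /= nth_take // sf.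
rewrite -(cat_take_drop u s) count_cat (drop_nth x0 lt_us) /= su eqxx.
by rewrite addnCA add1n ltnS ltn_addr.
Qed.

Lemma exists_down_crossing (f : nat -> nat) w a b : a < b -> w <= f a -> f b <= w ->
  exists2 d, a < d <= b & f d <= w <= f d.-1.
Proof.
move=> lt_ab le_wa le_bw.
have ex_d : exists d, (a < d) && (f d <= w) by exists b; rewrite lt_ab.
case: (ex_minnP ex_d) => d /andP [lt_ad le_dw] min_d.
exists d; first by rewrite lt_ad min_d ?lt_ab.
rewrite le_dw /=; case: d lt_ad le_dw min_d => // d; rewrite ltnS leq_eqVlt.
case/orP => [/eqP <- //|lt_ad] _ min_d /=.
by rewrite leqNgt; apply/negP => lt_dw; have := min_d d; rewrite lt_ad ltnW // ltnn => /(_ isT).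
Qed.

Lemma exists_last_above (z : seq nat) v l0 : l0 < size z -> v < nth 0 z l0 ->
  exists j, [/\ l0 <= j < size z, v < nth 0 z j & forall l, j < l < size z -> nth 0 z l <= v].
Proof.
move=> lt_l0 lt_v.
have ex_j : exists j, (l0 <= j < size z) && (v < nth 0 z j) by exists l0; rewrite leqnn lt_l0.
have ub_j j : (l0 <= j < size z) && (v < nth 0 z j) -> j <= size z.
  by case/andP => /andP [_ /ltnW].
case: (ex_maxnP ex_j ub_j) => j /andP [range_j lt_vj] max_j.
exists j; split => // l /andP [lt_jl lt_ln]; rewrite leqNgt; apply/negP => lt_vl.
have /andP [le_l0j _] := range_j.
by have := max_j l; rewrite (leq_trans le_l0j (ltnW lt_jl)) lt_ln lt_vl leqNgt lt_jl => /(_ isT).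
Qed.

Lemma count_mem_gt1_up (z : seq nat) M a w :
  (forall t, t.+1 < M -> 1 < count_mem t z -> 1 < count_mem t.+1 z) ->
  a <= w < M -> 1 < count_mem a z -> 1 < count_mem w z.
Proof.
move=> up; elim: w => [|w IHw] /andP [le_aw lt_wM] cnt_a; first by case: a le_aw cnt_a.
rewrite leq_eqVlt in le_aw; case/orP: le_aw => [/eqP <- //|le_aw].
by apply: up => //; apply: IHw => //; lia.
Qed.

Lemma exists_admissible_swap_from z d j0 : 0 < d < j0 -> j0 < size z ->
  nth 0 z d < nth 0 z j0 -> (forall l, j0 <= l < size z -> nth 0 z l <= (nth 0 z d.-1).+1) ->
  exists j, admissible_swap z d j.
Proof.
move=> /andP [d_gt0 lt_dj0] lt_j0n lt_zdj0 bound.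
have [j [/andP [le_j0j lt_jn] lt_zdj tail]] := exists_last_above lt_j0n lt_zdj0.
exists j; split => //; first by rewrite d_gt0 (leq_trans lt_dj0).
  by rewrite bound ?le_j0j.
by move=> lt_j1n; rewrite ltnW // ltnS tail ?leqnn.
Qed.

Lemma exists_admissible_swap_repeat z w f u j0 : f < u -> u < size z -> j0 < size z ->
  nth 0 z f = w -> nth 0 z u = w -> nth 0 z j0 = w.+1 ->
  (forall l, j0 < l < size z -> nth 0 z l < w) -> exists i j, admissible_swap z i j.
Proof.
move=> lt_fu lt_un lt_j0n zf zu zj0 tail.
have lt_uj0 : u < j0.
  case: (ltngtP u j0) => [//|lt_j0u|eq_uj0]; last by move: zj0; rewrite -eq_uj0 zu; lia.
  by have := tail u; rewrite lt_j0u lt_un zu ltnn => /(_ isT).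
have [d /andP [lt_fd le_du] /andP [le_zdw le_wzd]] :=
  @exists_down_crossing (nth 0 z) w f u lt_fu (eq_leq (esym zf)) (eq_leq zu).
exists d; apply: (exists_admissible_swap_from (j0 := j0)) => //.
- by apply/andP; split; lia.
- by rewrite zj0 ltnS.
move=> l /andP [le_j0l lt_ln]; rewrite leq_eqVlt in le_j0l; case/orP: le_j0l => [/eqP <-|lt_j0l].
  by rewrite zj0.
by rewrite ltnW // ltnS (leq_trans _ le_wzd) // ltnW // tail ?lt_j0l.
Qed.

Lemma exists_admissible_swap z M p : ferrers_roots z ->
  (forall x, x \in z -> x <= M) -> M \in z ->
  (forall t, t.+1 < M -> 1 < count_mem t z -> 1 < count_mem t.+1 z) ->
  (forall l, l <= p -> nth 0 z l = l) -> p < M -> nth 0 z p.+1 != p.+1 ->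
  exists i j, admissible_swap z i j.
Proof.
move=> /[dup] z_ok [_ le_zS] le_zM zM up prefix lt_pM ne_zp1.
have lt_Mn := ferrers_roots_mem_lt z_ok zM.
have lt_p1n : p.+1 < size z by rewrite (leq_ltn_trans lt_pM).
set a := nth 0 z p.+1 in ne_zp1.
have le_ap : a <= p by have := le_zS p lt_p1n; rewrite (prefix p) // -/a; move/eqP: ne_zp1; lia.
have lt_qn : index M z < size z by rewrite index_mem.
have zq : nth 0 z (index M z) = M by rewrite nth_index.
have lt_p1q : p.+1 < index M z.
  case: (ltnP p.+1 (index M z)) => // le_qp1; move: le_qp1; rewrite leq_eqVlt ltnS.
  case/orP => [/eqP eq_q | le_qp]; first by move: zq; rewrite eq_q -/a; lia.
  by move: zq; rewrite prefix //; lia.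
have lt_azq : a < nth 0 z (index M z) by rewrite zq; lia.
have [j0 [/andP [le_qj0 lt_j0n] lt_aj0 tail]] := exists_last_above lt_qn lt_azq.
have le_zj0M : nth 0 z j0 <= M by rewrite le_zM ?mem_nth.
have [le_zj0p1|lt_p1zj0] := leqP (nth 0 z j0) p.+1.
  exists p.+1; apply: (exists_admissible_swap_from (j0 := j0)) => //.
  - by apply/andP; split; lia.
  - move=> l /andP [le_j0l lt_ln]; rewrite /= (prefix p) //.
    rewrite leq_eqVlt in le_j0l; case/orP: le_j0l => [/eqP <- | lt_j0l]; first lia.
    by have := tail l; rewrite lt_j0l lt_ln => /(_ isT); lia.
pose w := (nth 0 z j0).-1.
have cnt_w : 1 < count_mem w z.
  apply: (@count_mem_gt1_up _ M a) => //; first by apply/andP; split; lia.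
  by apply/(count_mem_gt1P 0); exists a, p.+1; rewrite prefix //; split; lia.
have [f [u [lt_fu lt_un zf zu]]] := count_mem_gt1P 0 _ _ cnt_w.
apply: (exists_admissible_swap_repeat lt_fu lt_un lt_j0n zf zu) => [|l /tail]; lia.
Qed.

Section Staircase.
Variables (zB : seq nat) (M : nat).
Hypotheses (zB_ok : ferrers_roots zB) (zB_le : forall x, x \in zB -> x <= M) (M_in : M \in zB)
  (zB_up : forall t, t.+1 < M -> 1 < count_mem t zB -> 1 < count_mem t.+1 zB).

Lemma G_vertex_board_of_roots z : ferrers_roots z -> perm_eq z zB ->
  G_vertex (board_of_roots zB) (board_of_roots z).
Proof.
move=> z_ok pz; split; first exact: ferrers_board_of_roots.
apply: rook_equiv_perm_root_vector; rewrite ?ferrers_board_of_roots //.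
by rewrite !root_vector_board_of_roots // perm_map.
Qed.

Lemma exists_admissible_swap_perm z p : ferrers_roots z -> perm_eq z zB ->
  (forall l, l <= p -> nth 0 z l = l) -> p < M -> nth 0 z p.+1 != p.+1 ->
  exists i j, admissible_swap z i j.
Proof.
move=> z_ok pz; apply: exists_admissible_swap => //.
- by move=> x; rewrite (perm_mem pz); apply: zB_le.
- by rewrite (perm_mem pz).
- by move=> t; rewrite !(permP pz); apply: zB_up.
Qed.

Lemma staircase_or_mismatch z : ferrers_roots z -> 0 < size z ->
  (forall l, l <= M -> nth 0 z l = l) \/
  exists2 p, p < M & (forall l, l <= p -> nth 0 z l = l) /\ nth 0 z p.+1 != p.+1.
Proof.
case=> le_zl _ z_gt0.
have [stair|] := boolP [forall l : 'I_M.+1, nth 0 z l == l].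
  by left => l le_lM; apply/eqP: (forallP stair (Ordinal (le_lM : l < M.+1))).
rewrite negb_forall => /existsP ex_l; right.
have ex_d : exists d, (d <= M) && (nth 0 z d != d).
  by case: ex_l => l ne_l; exists l; rewrite -ltnS ltn_ord.
case: (ex_minnP ex_d) => -[|p] /andP [le_dM ne_d] min_d.
  by move: ne_d (le_zl 0 z_gt0); rewrite leqn0 => /negPf ->.
exists p => //; split => // l le_lp; apply/eqP/negPn/negP => ne_l.
by have := min_d l; rewrite ne_l (leq_trans le_lp (ltnW le_dM)) ltnNge le_lp => /(_ isT).
Qed.

Lemma connected_to_staircase z : ferrers_roots z -> perm_eq z zB ->
  exists z', [/\ ferrers_roots z', size z' = size z,
    G_connected (board_of_roots zB) (board_of_roots z) (board_of_roots z') &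
    forall l, l <= M -> nth 0 z' l = l].
Proof.
move: {-1}(root_weight z) (erefl (root_weight z)) => wz.
elim/ltn_ind: wz z => wz IHw z wzE z_ok pz.
have z_gt0 : 0 < size z by rewrite (perm_size pz); case: (zB) M_in.
case: (staircase_or_mismatch z_ok z_gt0) => [stair|[p lt_pM [prefix ne_p1]]].
  by exists z; split => //; apply: G_refl.
have [i [j /[dup] swap_ij [/andP [_ lt_ij] lt_jn lt_zij le_zji _]]] :=
  exists_admissible_swap_perm z_ok pz prefix lt_pM ne_p1.
have lt_in := ltn_trans lt_ij lt_jn.
have y_ok := ferrers_roots_swap z_ok swap_ij.
have py : perm_eq (swap_roots z i j) zB := perm_trans (perm_swap_roots lt_in lt_jn) pz.
have lt_wz : root_weight (swap_roots z i j) < wz by rewrite -wzE root_weight_swap.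
have [z' [z'_ok size_z' conn stair]] := IHw _ lt_wz _ erefl y_ok py.
exists z'; split; rewrite ?size_z' ?size_swap_roots //.
apply: (G_step _ _ _ conn); [exact: G_vertex_board_of_roots.. |].
apply: rook_edge_swap_roots; rewrite ?lt_zij //.
by case: y_ok => + _ => /(_ i); rewrite size_swap_roots nth_swap_roots // swap_index_l => ->.
Qed.

End Staircase.

Lemma vcount_roots_of_board b t : root_vector b = map Posz (roots_of_board b) ->
  vcount b t%:Z = count_mem t (roots_of_board b).
Proof. by move=> rvE; rewrite /vcount rvE count_map; apply: eq_count => x /=; rewrite eqz_nat. Qed.

Local Open Scope ring_scope.

Theorem lemma9 (B : seq nat) (M : nat) :
  ferrers B ->
  (forall z, z \in root_vector B -> (0 <= z)%R) ->
  (M%:Z \in root_vector B) ->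
  (forall z, z \in root_vector B -> (z <= M%:Z)%R) ->
  (forall i : nat, (i + 1 < M)%N ->
     (1 < vcount B i%:Z)%N -> (1 < vcount B (i.+1)%:Z)%N) ->
  exists B' : seq nat,
    [/\ size B' = size B, ferrers B', G_connected B B B' &
        forall i : nat, (i <= M)%N -> nth 0%R (root_vector B') i = i%:Z].
Proof.
move=> fB rv_ge0 M_rv rv_le up.
have rvE := root_vector_roots_of_board rv_ge0.
have zB_ok := ferrers_roots_of_board rv_ge0 fB.
have mem_zB x : (x%:Z \in root_vector B) = (x \in roots_of_board B).
  by rewrite rvE (mem_map (can_inj absz_nat)).
have zB_le x : x \in roots_of_board B -> (x <= M)%N.
  by rewrite -mem_zB => /rv_le; rewrite lez_nat.
have zB_up t : (t.+1 < M)%N -> (1 < count_mem t (roots_of_board B))%N ->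
    (1 < count_mem t.+1 (roots_of_board B))%N.
  by rewrite -!vcount_roots_of_board // -addn1; apply: up.
have M_in : M \in roots_of_board B by rewrite -mem_zB.
have [z' [z'_ok size_z' conn stair]] :=
  connected_to_staircase zB_ok zB_le M_in zB_up zB_ok (perm_refl _).
have lt_Mz' : (M < size z')%N by rewrite size_z' (ferrers_roots_mem_lt zB_ok).
rewrite (roots_of_boardK rv_ge0) in conn.
exists (board_of_roots z'); split => //.
- by rewrite size_board_of_roots size_z' size_roots_of_board.
- exact: ferrers_board_of_roots.
move=> i le_iM; rewrite root_vector_board_of_roots // (nth_map 0%N) ?stair //.
exact: leq_ltn_trans le_iM lt_Mz'.
Qed.
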